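(* Let $H\subseteq\binom{[n]}{3}$ be such that $\bigcup_{h\in H}h=[n]$ and every $h\in H$ contains a vertex $v$ with $d_H(v)\ge2$. Then $|H|\ge 2n/5$.
   Context: $d_H(v)=|\{h\in H: v\in h\}|$ denotes the degree of $v$ in $H$. *)

From mathcomp Require Import all_boot.
Set Implicit Arguments. Unset Strict Implicit. Unset Printing Implicit Defensive.

(* Vertex set [n] is modelled as 'I_n; a 3-uniform hypergraph is a set of 3-subsets. *)
Definition deg (n : nat) (H : {set {set 'I_n}}) (v : 'I_n) : nat :=
  #|[set h in H | v \in h]|.

From mathcomp Require Import all_boot.
Set Implicit Arguments. Unset Strict Implicit. Unset Printing Implicit Defensive.

(* A discharging argument.  Give every vertex v the weight w(v) = 2 if
   d_H(v) <= 1 and w(v) = 1 otherwise.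
   - Every vertex is covered, so d_H(v) >= 1 and hence d_H(v) * w(v) >= 2.
   - Every edge h has a vertex of degree >= 2, so its total weight
     \sum_(v in h) w(v) is at most 1 + 2 + 2 = 5.
   Double counting the incidences (v, h) with v \in h \in H gives
   2n <= \sum_v d_H(v) w(v) = \sum_(h in H) \sum_(v in h) w(v) <= 5 |H|. *)

Lemma sum_deg_weight (T : finType) (H : {set {set T}}) (f : T -> nat) :
  \sum_(v : T) #|[set h in H | v \in h]| * f v = \sum_(h in H) \sum_(v in h) f v.
Proof.
transitivity (\sum_(v : T) \sum_(h | (h \in H) && (v \in h)) f v).
  apply: eq_bigr => v _; rewrite -sum_nat_const.
  by apply: eq_bigl => h; rewrite inE.
rewrite (exchange_big_dep (fun h => h \in H)) /=; last by move=> v h _ /andP[].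
by apply: eq_bigr => h hH; apply: eq_bigl => v; rewrite hH.
Qed.

Section Discharging.

Variables (n : nat) (H : {set {set 'I_n}}).

Definition weight (v : 'I_n) : nat := if deg H v <= 1 then 2 else 1.

Lemma weight_charge (v : 'I_n) : 0 < deg H v -> 2 <= deg H v * weight v.
Proof.
rewrite /weight => dv; case: ifP => low_deg.
  by have -> : deg H v = 1 by apply/eqP; rewrite eqn_leq low_deg dv.
by rewrite muln1 ltnNge low_deg.
Qed.

Lemma edge_weight (h : {set 'I_n}) (k : nat) (v0 : 'I_n) :
  #|h| = k.+1 -> v0 \in h -> 2 <= deg H v0 -> \sum_(v in h) weight v <= k.*2.+1.
Proof.
move=> card_h v0h high_v0.
rewrite (bigD1 v0) //=.
have -> : weight v0 = 1 by rewrite /weight leqNgt high_v0.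
rewrite add1n ltnS.
have card_rest : #|[pred v in h | v != v0]| = k.
  have := cardsD1 v0 h; rewrite v0h card_h => /eqP; rewrite eqSS => /eqP ->.
  by apply: eq_card => v; rewrite !inE andbC.
rewrite -card_rest -muln2 -sum_nat_const.
by apply: leq_sum => v _; rewrite /weight; case: ifP.
Qed.

End Discharging.

Theorem lemmaA1 (n : nat) (H : {set {set 'I_n}}) :
  (forall h, h \in H -> #|h| = 3) ->
  \bigcup_(h in H) h = [set: 'I_n] ->
  (forall h, h \in H -> exists2 v, v \in h & 2 <= deg H v) ->
  2 * n <= 5 * #|H|.
Proof.
move=> card3 cover high.
have covered v : 0 < deg H v.
  have : v \in \bigcup_(h in H) h by rewrite cover inE.
  by case/bigcupP=> h hH vh; apply/card_gt0P; exists h; rewrite inE hH vh.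
have vertex_bound : \sum_(v : 'I_n) 2 <= \sum_(v : 'I_n) deg H v * weight H v.
  by apply: leq_sum => v _; apply: weight_charge.
have edge_bound : \sum_(h in H) \sum_(v in h) weight H v <= \sum_(h in H) 5.
  apply: leq_sum => h hH; have [v0 v0h high_v0] := high h hH.
  exact: (edge_weight (card3 h hH) v0h high_v0).
have := leq_trans vertex_bound (leq_trans (eq_leq (sum_deg_weight H _)) edge_bound).
by rewrite !sum_nat_const card_ord mulnC [5 * _]mulnC.
Qed.
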